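(* Let $\langle A,f,g\rangle$ be a PS-algebra satisfying (ABT0) $x\leq f(x,x)$, (ABT2) $y\cdot f(x,z)\leq f(x\cdot f(x,y),z)$ and (ABT3) $f(x,g(x,-y)\cdot y)\leq y$ for all $x,y,z\in A$. Then $\langle A,f,g\rangle$ satisfies (ABTW): $a\neq0\Rightarrow g(a,a)\leq a$ for all $a\in A$, if and only if it satisfies: for all $a,b\in A$, if $a\cdot b\neq0$ then $g(a,b)\leq f(a,b)$.
   Context: A PS-algebra is $\langle A,f,g\rangle$ where $A$ is a Boolean algebra with at least two elements (operations $+,\cdot,-,0,1$) and $f,g\colon A^2\to A$ satisfy: $f(x,y)=0$ whenever $x=0$ or $y=0$; $f$ is additive in each argument ($f(x+x',y)=f(x,y)+f(x',y)$, $f(x,y+y')=f(x,y)+f(x,y')$); $g(x,y)=1$ whenever $x=0$ or $y=0$; $g$ is co-additive in each argument ($g(x+x',y)=g(x,y)\cdot g(x',y)$, $g(x,y+y')=g(x,y)\cdot g(x,y')$). *)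

From mathcomp Require Import all_boot all_order.
Set Implicit Arguments. Unset Strict Implicit. Unset Printing Implicit Defensive.
Import Order.Theory.
Local Open Scope order_scope.

(* A Boolean algebra is a complemented distributive lattice with top and
   bottom (ctbDistrLatticeType): + is join `|`, . is meet `&`, - is ~`,
   0 is \bot, 1 is \top. *)

Definition PS_algebra (d : Order.disp_t) (A : ctbDistrLatticeType d)
  (f g : A -> A -> A) : Prop :=
  ((\bot : A) <> \top) /\
      (forall x y : A, x = \bot \/ y = \bot -> f x y = \bot) /\
      (forall x x' y : A, f (x `|` x') y = f x y `|` f x' y) /\
      (forall x y y' : A, f x (y `|` y') = f x y `|` f x y') /\
      (forall x y : A, x = \bot \/ y = \bot -> g x y = \top) /\
      (forall x x' y : A, g (x `|` x') y = g x y `&` g x' y) /\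
      (forall x y y' : A, g x (y `|` y') = g x y `&` g x y').

From mathcomp Require Import all_boot all_order.
Import Order.Theory.
Local Open Scope order_scope.

(* (=>): f is monotone and g antitone in each argument, so for
   c := a & b <> 0 we get g a b <= g c c <= c <= f c c <= f a b by ABTW and ABT0.
   (<=): put c := g a a & -a. ABT3 at y := -a gives f a c <= -a, i.e.
   a & f a c = 0, so ABT2 yields c & f a a <= f 0 a = 0. The hypothesis at
   b := a gives c <= g a a <= f a a, hence c = 0, which is g a a <= a. *)

Section JoinMorphisms.
Variables (d d' : Order.disp_t) (A : latticeType d) (B : latticeType d').

Lemma join_morph_homo (h : A -> B) :
  {morph h : x y / x `|` y} -> {homo h : x y / x <= y}.
Proof. by move=> hU x y /join_idPr xUy; rewrite -xUy hU leUl. Qed.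

Lemma join_meet_morph_anti (h : A -> B) :
  {morph h : x y / x `|` y >-> x `&` y} -> {homo h : x y /~ x <= y}.
Proof. by move=> hU x y /join_idPr xUy; rewrite -xUy hU leIl. Qed.

End JoinMorphisms.

Section PSAlgebra.
Variables (d : Order.disp_t) (A : ctbDistrLatticeType d) (f g : A -> A -> A).
Hypothesis PS : PS_algebra f g.

Lemma PS_f0x y : f \bot y = \bot.
Proof. by case: PS => _ [f0 _]; apply: f0; left. Qed.

Lemma PS_f_homol {y} : {homo f^~ y : x x' / x <= x'}.
Proof. by case: PS => _ [_ [fU _]]; apply: join_morph_homo => x x'; apply: fU. Qed.

Lemma PS_f_homor {x} : {homo f x : y y' / y <= y'}.
Proof. by case: PS => _ [_ [_ [fU _]]]; apply: join_morph_homo. Qed.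

Lemma PS_g_antil {y} : {homo g^~ y : x x' /~ x <= x'}.
Proof.
by case: PS => _ [_ [_ [_ [_ [gU _]]]]]; apply: join_meet_morph_anti => x x'; apply: gU.
Qed.

Lemma PS_g_antir {x} : {homo g x : y y' /~ y <= y'}.
Proof. by case: PS => _ [_ [_ [_ [_ [_ gU]]]]]; apply: join_meet_morph_anti. Qed.

Lemma PS_g_le_meet a b : g a b <= g (a `&` b) (a `&` b).
Proof. exact: le_trans (PS_g_antir _ _ (leIr b a)) (PS_g_antil _ _ (leIl a b)). Qed.

Lemma PS_f_meet_le a b : f (a `&` b) (a `&` b) <= f a b.
Proof. exact: le_trans (PS_f_homol _ _ (leIl a b)) (PS_f_homor _ _ (leIr b a)). Qed.

Hypothesis ABT0 : forall x : A, x <= f x x.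
Hypothesis ABT2 : forall x y z : A, y `&` f x z <= f (x `&` f x y) z.
Hypothesis ABT3 : forall x y : A, f x (g x (~` y) `&` y) <= y.

Lemma g_le_f_of_ABTW (ABTW : forall a : A, a <> \bot -> g a a <= a) a b :
  a `&` b <> \bot -> g a b <= f a b.
Proof.
move=> ab0; rewrite (le_trans (PS_g_le_meet a b)) // (le_trans (ABTW _ ab0)) //.
exact: le_trans (ABT0 _) (PS_f_meet_le a b).
Qed.

Lemma meet_f_g_compl_eq0 a : a `&` f a (g a a `&` ~` a) = \bot.
Proof. by apply/eqP; rewrite disj_leC lexC; have := ABT3 a (~` a); rewrite complK. Qed.

Lemma meet_g_compl_f_eq0 a : (g a a `&` ~` a) `&` f a a = \bot.
Proof. by apply/eqP; rewrite -lex0 -(PS_f0x a) -(meet_f_g_compl_eq0 a) ABT2. Qed.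

Lemma ABTW_of_g_le_f (gf : forall a b : A, a `&` b <> \bot -> g a b <= f a b) a :
  a <> \bot -> g a a <= a.
Proof.
move=> a0; have gaa : g a a <= f a a by apply: gf; rewrite meetxx.
have cf : g a a `&` ~` a <= f a a by rewrite (le_trans (leIl _ _)).
by move/eqP: (meet_g_compl_f_eq0 a); rewrite (meet_idPl cf) disj_leC complK.
Qed.

End PSAlgebra.

Theorem lemma34 (d : Order.disp_t) (A : ctbDistrLatticeType d) (f g : A -> A -> A) :
  PS_algebra f g ->
  (forall x : A, x <= f x x) ->
  (forall x y z : A, y `&` f x z <= f (x `&` f x y) z) ->
  (forall x y : A, f x (g x (~` y) `&` y) <= y) ->
  ((forall a : A, a <> \bot -> g a a <= a) <->
   (forall a b : A, a `&` b <> \bot -> g a b <= f a b)).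
Proof.
move=> PS ABT0 ABT2 ABT3; split.
- exact: g_le_f_of_ABTW.
- exact: ABTW_of_g_le_f.
Qed.
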